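(* Let $n\ge1$, $0<\alpha\le 1$, let $\Omega\subset\mathbb{R}^n$ be a bounded domain, and let $f\in C(\Omega)$ be bounded with $f\le0$. Let $u$ be a bounded viscosity supersolution to $\mathcal{L}_\infty u=f$ in $\Omega$. Then for every $x\in\Omega$, $$\mathcal{L}^-_\infty u(x)=\inf_{y\in\mathbb{R}^n}\frac{u(y)-u(x)}{|x-y|^\alpha}=\inf_{y\in\mathbb{R}^n\setminus\Omega}\frac{u(y)-u(x)}{|y-x|^\alpha},$$ i.e. the infimum defining $\mathcal{L}^-_\infty u(x)$ equals the infimum taken only over the complement of $\Omega$.
   Context: For $0<\alpha\le1$ and a function $\varphi:\mathbb{R}^n\to\mathbb{R}$, the nonlocal infinity Laplacian is $\mathcal{L}_\infty\varphi(x)=\mathcal{L}^+_\infty\varphi(x)+\mathcal{L}^-_\infty\varphi(x)$, where $\mathcal{L}^+_\infty\varphi(x)=\sup_{y\in\mathbb{R}^n}\frac{\varphi(y)-\varphi(x)}{|x-y|^\alpha}$ and $\mathcal{L}^-_\infty\varphi(x)=\inf_{y\in\mathbb{R}^n}\frac{\varphi(y)-\varphi(x)}{|x-y|^\alpha}$ (with $y\neq x$). Viscosity supersolution: a lower semicontinuous $u:\mathbb{R}^n\to\mathbb{R}$ with $|u(x)|\le C(1+|x|)^\beta$ for some $C>0$, $\beta<\alpha$, is a viscosity supersolution to $\mathcal{L}_\infty u=f$ in $\Omega$ if for every $x_0\in\Omega$ and every locally Lipschitz continuous $\varphi:\mathbb{R}^n\to\mathbb{R}$ with $|\varphi(x)|\le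 C(1+|x|)^\beta$ for some $C>0$, $\beta<\alpha$, such that $\varphi(x_0)=u(x_0)$ and $u\ge\varphi$ on $\mathbb{R}^n$, one has $\mathcal{L}_\infty\varphi(x_0)\le f(x_0)$. *)

From HB Require Import structures.
From mathcomp Require Import all_boot all_order all_algebra.
From mathcomp Require Import all_classical all_reals all_analysis.
Set Implicit Arguments. Unset Strict Implicit. Unset Printing Implicit Defensive.
Import Order.TTheory GRing.Theory Num.Theory.
Import numFieldNormedType.Exports.
Local Open Scope classical_set_scope.
Local Open Scope ring_scope.

Section NonlocalInfinityLaplacian.
Variable R : realType.
Variable n : nat.
Implicit Types (x y z : 'rV[R]_n) (u phi : 'rV[R]_n -> R).

Definition enorm x : R := Num.sqrt (\sum_(i < n) (x ord0 i) ^+ 2).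
Definition edist x y : R := enorm (x - y).

Definition dq (alpha : R) phi x y : R := (phi y - phi x) / (edist x y `^ alpha).

Definition Lplus (alpha : R) phi x : \bar R :=
  ereal_sup [set (dq alpha phi x y)%:E | y in [set y | y != x]].
Definition Lminus (alpha : R) phi x : \bar R :=
  ereal_inf [set (dq alpha phi x y)%:E | y in [set y | y != x]].
Definition Linf (alpha : R) phi x : \bar R := (Lplus alpha phi x + Lminus alpha phi x)%E.

Definition growth_ok (alpha : R) phi : Prop :=
  exists C beta : R, 0 < C /\ beta < alpha /\
    forall x, `|phi x| <= C * (1 + enorm x) `^ beta.

Definition lower_semicont u : Prop :=
  forall x (e : R), 0 < e -> exists d : R, 0 < d /\
    forall y, edist x y < d -> u x - e < u y.

Definition locally_lipschitz phi : Prop :=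
  forall x, exists r L : R, 0 < r /\
    forall y z, edist x y < r -> edist x z < r -> `|phi y - phi z| <= L * edist y z.

Definition visc_supersol (alpha : R) (Omega : set 'rV[R]_n) (f : 'rV[R]_n -> R) u : Prop :=
  lower_semicont u /\ growth_ok alpha u /\
  forall x0 phi, Omega x0 -> locally_lipschitz phi -> growth_ok alpha phi ->
    phi x0 = u x0 -> (forall x, phi x <= u x) ->
    (Linf alpha phi x0 <= (f x0)%:E)%E.

Definition bounded_domain (Omega : set 'rV[R]_n) : Prop :=
  Omega !=set0 /\ open Omega /\ connected Omega /\
  exists M : R, forall x, Omega x -> enorm x <= M.

End NonlocalInfinityLaplacian.

From Pilot Require Import Defs.
From HB Require Import structures.
From mathcomp Require Import all_boot all_order all_algebra.
From mathcomp Require Import all_classical all_reals all_analysis.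
From mathcomp Require Import ring lra.
Set Implicit Arguments. Unset Strict Implicit. Unset Printing Implicit Defensive.
Import Order.TTheory GRing.Theory Num.Theory.
Import numFieldNormedType.Exports.
Local Open Scope classical_set_scope.
Local Open Scope ring_scope.

(* The inequality [<=] is trivial.  For [>=], let [m] be the infimum over the
   complement of [Omega]: points of the complement far from [x] give [m <= 0],
   and we may assume [m] finite, so that [u >= C := u x + m |x - .|^alpha]
   outside [Omega].  This comparison propagates into [Omega].  Otherwise the
   lower semicontinuous function [u - C] attains a negative minimum [- del] on
   a compact set containing [Omega], at some [z] in [Omega] with [z <> x], and
     psi := max (u x - del + m (max |x - .| |x - z|)^alpha)
                (max (u x - del / 2 - L |x - .|) (- M - 1))
   (with [M] a bound of [|u|] and the slope [L] large enough for the tent to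
   stay below [u]) is a bounded Lipschitz function touching [u] from below at
   [z].  By subadditivity of [t ^ alpha], [L^- psi z >= m]; the test point [x]
   gives [L^+ psi z >= del / (2 |x - z|^alpha) - m].  Hence [L psi z > 0 >= f z],
   contradicting the supersolution property. *)

Section EuclideanDistance.
Variables (R : realType) (n : nat).
Implicit Types (v w x y z : 'rV[R]_n).

Lemma sumr_sqr_ge0 (a : 'I_n -> R) : 0 <= \sum_i a i ^+ 2.
Proof. by apply: sumr_ge0 => i _; exact: sqr_ge0. Qed.

Lemma enorm_ge0 v : 0 <= enorm v.
Proof. exact: sqrtr_ge0. Qed.

Lemma enorm_sqr v : enorm v ^+ 2 = \sum_i v ord0 i ^+ 2.
Proof. by rewrite /enorm sqr_sqrtr // sumr_sqr_ge0. Qed.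

Lemma enorm_eq0 v : enorm v = 0 -> v = 0.
Proof.
move=> v0; have : \sum_i v ord0 i ^+ 2 = 0 by rewrite -enorm_sqr v0 expr0n.
move/eqP; rewrite psumr_eq0; last by move=> i _; exact: sqr_ge0.
move/allP => vi0; apply/rowP => i; rewrite mxE.
by have := vi0 i (mem_index_enum _); rewrite /= sqrf_eq0 => /eqP.
Qed.

Lemma enormN v : enorm (- v) = enorm v.
Proof. by rewrite /enorm; congr Num.sqrt; apply: eq_bigr => i _; rewrite mxE sqrrN. Qed.

Lemma ler_coord_enorm v i : `|v ord0 i| <= enorm v.
Proof.
rewrite -(ler_pXn2r (n:=2)) // ?nnegrE ?enorm_ge0 // enorm_sqr real_normK ?num_real //.
by rewrite (bigD1 i) //= lerDl sumr_ge0 // => j _; exact: sqr_ge0.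
Qed.

Lemma enorm_le_sum_norm v : enorm v <= \sum_i `|v ord0 i|.
Proof.
rewrite -(ler_pXn2r (n:=2)) // ?nnegrE ?enorm_ge0 ?sumr_ge0 // enorm_sqr.
have sum_sqr_le (s : seq 'I_n) :
    \sum_(i <- s) `|v ord0 i| ^+ 2 <= (\sum_(i <- s) `|v ord0 i|) ^+ 2.
  elim: s => [|j s IH]; first by rewrite !big_nil expr0n.
  rewrite !big_cons sqrrD -addrA lerD2l (le_trans IH) // lerDr.
  by rewrite mulrn_wge0 // mulr_ge0 // sumr_ge0.
apply: le_trans (sum_sqr_le _).
by apply: ler_sum => i _; rewrite real_normK ?num_real.
Qed.

Lemma cauchy_schwarz (a b : 'I_n -> R) :
  \sum_i a i * b i <= Num.sqrt (\sum_i a i ^+ 2) * Num.sqrt (\sum_i b i ^+ 2).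
Proof.
set A := \sum_i a i ^+ 2; set B := \sum_i b i ^+ 2; set P := \sum_i a i * b i.
have [A0 B0] : 0 <= A /\ 0 <= B by split; exact: sumr_sqr_ge0.
have [P0|P0] := lerP P 0; first by rewrite (le_trans P0) // mulr_ge0 ?sqrtr_ge0.
have Q t : 0 <= t ^+ 2 * A + (2 * t) * P + B.
  have -> : t ^+ 2 * A + (2 * t) * P + B = \sum_i (a i * t + b i) ^+ 2.
    by rewrite !mulr_sumr -!big_split /=; apply: eq_bigr => i _; ring.
  by apply: sumr_ge0 => i _; exact: sqr_ge0.
suff PAB : P ^+ 2 <= A * B.
  by rewrite -sqrtrM // -(ger0_norm (ltW P0)) -sqrtr_sqr ler_sqrt // mulr_ge0.
have [A00|Apos] := eqVneq A 0.
  have := Q (- (B + 1) / (2 * P)).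
  have -> : 2 * (- (B + 1) / (2 * P)) * P = - (B + 1) by field; rewrite gt_eqF.
  by rewrite A00 mulr0 add0r; lra.
have Ap : 0 < A by rewrite lt_def Apos A0.
have := Q (- P / A); rewrite -(pmulr_rge0 _ Ap).
have -> : A * ((- P / A) ^+ 2 * A + 2 * (- P / A) * P + B) = A * B - P ^+ 2.
  by field; rewrite gt_eqF.
by rewrite subr_ge0.
Qed.

Lemma enormD_le v w : enorm (v + w) <= enorm v + enorm w.
Proof.
rewrite -(ler_pXn2r (n:=2)) // ?nnegrE ?addr_ge0 ?enorm_ge0 //.
rewrite enorm_sqr sqrrD !enorm_sqr.
have -> : \sum_i (v + w) ord0 i ^+ 2 =
    \sum_i v ord0 i ^+ 2 + 2 * \sum_i (v ord0 i * w ord0 i) + \sum_i w ord0 i ^+ 2.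
  by rewrite mulr_sumr -!big_split /=; apply: eq_bigr => i _; rewrite mxE; ring.
by rewrite lerD2r lerD2l mulr_natl lerMn2r /= cauchy_schwarz.
Qed.

Lemma edist_ge0_rV x y : 0 <= Defs.edist x y.
Proof. exact: enorm_ge0. Qed.

Lemma edistC x y : Defs.edist x y = Defs.edist y x.
Proof. by rewrite /Defs.edist -enormN opprB. Qed.

Lemma edist_triangle_rV x y z : Defs.edist x z <= Defs.edist x y + Defs.edist y z.
Proof. by rewrite /Defs.edist (le_trans _ (enormD_le _ _)) // addrA subrK. Qed.

Lemma edistxx x : Defs.edist x x = 0.
Proof.
rewrite /Defs.edist subrr /enorm big1 ?sqrtr0 // => i _.
by rewrite mxE expr0n.
Qed.

Lemma edist_gt0 x y : x != y -> 0 < Defs.edist x y.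
Proof.
move=> xy; rewrite lt_def edist_ge0_rV andbT; apply/eqP => /enorm_eq0 /eqP.
by rewrite subr_eq0 (negbTE xy).
Qed.

Lemma ler_dist_edist x y w : `|Defs.edist x y - Defs.edist x w| <= Defs.edist y w.
Proof.
rewrite ler_norml; have := edist_triangle_rV x y w; have := edist_triangle_rV x w y.
by rewrite (edistC w y); lra.
Qed.

Lemma ler_enormB_edist x y : enorm y - enorm x <= Defs.edist x y.
Proof.
have := enormD_le (y - x) x; rewrite subrK.
by rewrite -[enorm (y - x)]/(Defs.edist y x) edistC; lra.
Qed.

Lemma nbhs_edist z (d : R) : 0 < d -> nbhs z [set w | Defs.edist z w < d].
Proof.
move=> d0; apply/nbhs_ballP; exists (d / n.+1%:R) => [|w [_ zw] /=].
  by rewrite /= divr_gt0 // ltr0n.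
apply: le_lt_trans (enorm_le_sum_norm _) _.
apply: (@le_lt_trans _ _ (\sum_(i < n) (d / n.+1%:R))).
  by apply: ler_sum => i _; rewrite !mxE; exact/ltW/(zw ord0 i).
rewrite sumr_const card_ord -[_ *+ n]mulr_natr -mulrA gtr_pMr // mulrC.
by rewrite ltr_pdivrMr ?ltr0n // mul1r ltr_nat.
Qed.

Lemma exists_enorm_ge (t : R) : (0 < n)%N -> exists v, t <= enorm v.
Proof.
move=> n0; exists (const_mx `|t|).
by rewrite (le_trans _ (ler_coord_enorm _ (Ordinal n0))) // mxE normr_id ler_norm.
Qed.

End EuclideanDistance.

Lemma ler_dist_max (R : realDomainType) (a b c d : R) :
  `|Num.max a b - Num.max c d| <= `|a - c| + `|b - d|.
Proof.
have := ler_norm (a - c); have := ler_norm (c - a); rewrite (distrC c).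
have := ler_norm (b - d); have := ler_norm (d - b); rewrite (distrC d).
rewrite ler_norml; case: (leP a b) => ab; case: (leP c d) => cd; lra.
Qed.

Section PowerAlpha.
Variables (R : realType) (alpha : R).
Hypotheses (alpha_gt0 : 0 < alpha) (alpha_le1 : alpha <= 1).

Lemma ler_powR_alpha (a b : R) : 0 <= a -> a <= b -> a `^ alpha <= b `^ alpha.
Proof.
move=> a0 ab; apply: ge0_ler_powR; rewrite ?nnegrE //; first exact: ltW.
exact: le_trans ab.
Qed.

Lemma powR_alpha0 : 0 `^ alpha = 0 :> R.
Proof. by rewrite powR0 // gt_eqF. Qed.

Lemma ger_powR_alpha_sub1 (a b : R) : 0 < b -> b <= a ->
  a `^ (alpha - 1) <= b `^ (alpha - 1).
Proof.
move=> b0 ba; have a0 : 0 < a by exact: lt_le_trans ba.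
rewrite -[alpha - 1]opprB !powRN lef_pV2 ?posrE ?powR_gt0 //.
by apply: ge0_ler_powR; rewrite ?nnegrE ?subr_ge0 // ltW.
Qed.

Lemma powR_alphaD_le (a b : R) : 0 <= a -> 0 <= b ->
  (a + b) `^ alpha <= a `^ alpha + b `^ alpha.
Proof.
rewrite le_eqVlt => /predU1P[<- _|a0]; first by rewrite add0r powR_alpha0 add0r.
rewrite le_eqVlt => /predU1P[<-|b0]; first by rewrite addr0 powR_alpha0 addr0.
have ab0 : 0 < a + b by rewrite addr_gt0.
rewrite -!(mulr_powRB1 _ alpha_gt0) ?(ltW a0) ?(ltW b0) ?(ltW ab0) // mulrDl.
by rewrite lerD // ler_pM2l // ger_powR_alpha_sub1 // ?lerDl ?lerDr ltW.
Qed.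

Lemma ler_dist_powR_alpha (a b : R) : 0 <= a -> 0 <= b ->
  `|a `^ alpha - b `^ alpha| <= `|a - b| `^ alpha.
Proof.
wlog ba : a b / b <= a.
  move=> W a0 b0; have [ab|/ltW ba] := leP a b; last exact: W.
  by rewrite distrC (distrC a); exact: W.
move=> a0 b0; rewrite !ger0_norm ?subr_ge0 ?ler_powR_alpha //.
by rewrite lerBlDl -{1}(subrK b a) addrC powR_alphaD_le ?subr_ge0.
Qed.

Lemma ler_dist_powR_alpha_ge (s a b : R) : 0 < s -> s <= a -> s <= b ->
  `|a `^ alpha - b `^ alpha| <= s `^ (alpha - 1) * `|a - b|.
Proof.
move=> s0; wlog ba : a b / b <= a.
  move=> W sa sb; have [ab|/ltW ba] := leP a b; last exact: W.
  by rewrite distrC (distrC a); exact: W.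
move=> sa sb; have b0 : 0 < b by exact: lt_le_trans sb.
have a0 : 0 < a by exact: lt_le_trans ba.
rewrite !ger0_norm ?subr_ge0 //; last exact: ler_powR_alpha (ltW b0) ba.
rewrite -!(mulr_powRB1 _ alpha_gt0) ?(ltW a0) ?(ltW b0) //.
apply: (@le_trans _ _ ((a - b) * b `^ (alpha - 1))).
  by rewrite mulrBl lerD2r ler_pM2l // ger_powR_alpha_sub1.
by rewrite mulrC ler_wpM2r ?subr_ge0 // ger_powR_alpha_sub1.
Qed.

End PowerAlpha.

Section EdistFunctions.
Variables (R : realType) (n : nat).
Implicit Types (x y z w : 'rV[R]_n) (phi psi u v g : 'rV[R]_n -> R).

Definition edist_lipschitz (L : R) phi :=
  forall y z, `|phi y - phi z| <= L * Defs.edist y z.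

Lemma edist_lipschitz_locally L phi :
  edist_lipschitz L phi -> locally_lipschitz phi.
Proof. by move=> phiL x; exists 1, L; split=> // y z _ _; exact: phiL. Qed.

Lemma edist_lipschitz_edist x : edist_lipschitz 1 (Defs.edist x).
Proof. by move=> y z; rewrite mul1r ler_dist_edist. Qed.

Lemma edist_lipschitz_cst c : edist_lipschitz 0 (fun=> c).
Proof. by move=> y z; rewrite subrr normr0 mul0r. Qed.

Lemma edist_lipschitz_max L1 L2 phi psi :
  edist_lipschitz L1 phi -> edist_lipschitz L2 psi ->
  edist_lipschitz (L1 + L2) (fun w => Num.max (phi w) (psi w)).
Proof.
move=> phiL psiL y z; rewrite mulrDl (le_trans (ler_dist_max _ _ _ _)) //.
exact: lerD.
Qed.

Lemma edist_lipschitz_affine L c k phi : edist_lipschitz L phi ->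
  edist_lipschitz (`|k| * L) (fun w => c + k * phi w).
Proof.
move=> phiL y z; rewrite opprD addrACA subrr add0r -mulrBr normrM -mulrA.
exact: ler_wpM2l.
Qed.

Lemma edist_lipschitz_powR (alpha s L : R) phi :
  0 < alpha -> alpha <= 1 -> 0 < s -> 0 <= L -> (forall w, s <= phi w) ->
  edist_lipschitz L phi ->
  edist_lipschitz (s `^ (alpha - 1) * L) (fun w => phi w `^ alpha).
Proof.
move=> a0 a1 s0 L0 phis phiL y z.
rewrite (le_trans (ler_dist_powR_alpha_ge a0 a1 s0 (phis y) (phis z))) //.
by rewrite -mulrA ler_wpM2l // powR_ge0.
Qed.

Lemma bounded_growth_ok (alpha C : R) phi : 0 < alpha ->
  (forall w, `|phi w| <= C) -> growth_ok alpha phi.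
Proof.
move=> a0 phiC; exists (C + 1), 0; split; last split => // w.
  by have := le_trans (normr_ge0 _) (phiC 0); lra.
by rewrite powRr0 mulr1 (le_trans (phiC w)) // lerDl.
Qed.

Lemma lower_semicontD u v :
  lower_semicont u -> lower_semicont v -> lower_semicont (u \+ v).
Proof.
move=> ulsc vlsc x e e0.
have e2 : 0 < e / 2 by rewrite divr_gt0.
have [du [du0 hu]] := ulsc x _ e2; have [dv [dv0 hv]] := vlsc x _ e2.
exists (Num.min du dv); split=> [|y]; first by rewrite lt_min du0 dv0.
rewrite lt_min => /andP[/hu uy /hv vy] /=; lra.
Qed.

Lemma holder_lower_semicont (alpha K : R) phi : 0 < alpha ->
  (forall y z, `|phi y - phi z| <= K * Defs.edist y z `^ alpha) ->
  lower_semicont phi.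
Proof.
move=> a0 phiH x e e0; have K1 : 0 < `|K| + 1 by rewrite ltr_pwDr.
pose q := e / (`|K| + 1); have q0 : 0 < q by rewrite divr_gt0.
exists (q `^ alpha^-1); split => [|y xy]; first exact: powR_gt0.
have qE : (q `^ alpha^-1) `^ alpha = q.
  by rewrite -powRrM mulVf ?lt0r_neq0 // powRr1 // ltW.
suff : `|phi x - phi y| < e by rewrite ltr_norml; lra.
apply: le_lt_trans (phiH x y) _; apply: le_lt_trans (ler_norm _) _.
rewrite normrM (ger0_norm (powR_ge0 _ _)); apply: (@le_lt_trans _ _ (`|K| * q)).
  rewrite ler_wpM2l // -[X in _ <= X]qE.
  exact: (ler_powR_alpha a0 (edist_ge0_rV x y) (ltW xy)).
by rewrite /q mulrA ltr_pdivrMr // mulrC ltr_pM2l // ltrDl.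
Qed.

Lemma lower_semicont_min_compact (K : set 'rV[R]_n) g y0 :
  compact K -> K y0 -> lower_semicont g ->
  exists2 z, K z & forall w, K w -> g z <= g w.
Proof.
move=> cK Ky0 glsc.
pose D := [set t : R | exists w, K w /\ g w < t].
pose E t := [set w | K w /\ g w < t].
have D0 : D (g y0 + 1) by exists y0; split => //; rewrite ltrDl.
(* the sublevel sets of [g] on [K] form a proper filter base *)
have FF : Filter (filter_from D E).
  apply: filter_from_filter; first by exists (g y0 + 1).
  move=> i j [wi [Kwi gi]] [wj [Kwj gj]]; exists (Num.min i j).
    have [ij|/ltW ji] := leP i j.
      by exists wi; split => //; rewrite lt_min gi (lt_le_trans gi ij).
    by exists wj; split => //; rewrite lt_min gj (lt_le_trans gj ji).
  by move=> w [Kw]; rewrite lt_min => /andP[].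
have PF : ProperFilter (filter_from D E).
  by apply: filter_from_proper => // t [w [Kw gw]]; exists w.
have [z [Kz clz]] := cK _ PF (ex_intro2 _ _ _ D0 (fun w => @proj1 _ _)).
exists z => // w Kw; rewrite leNgt; apply/negP => gwz.
have e0 : 0 < (g z - g w) / 2 by rewrite divr_gt0 // subr_gt0.
have [d [d0 hd]] := glsc z _ e0.
have Et : filter_from D E (E ((g w + g z) / 2)).
  by exists ((g w + g z) / 2) => //; exists w; split => //; lra.
have [v [[Kv gv] dv]] := clz _ _ Et (nbhs_edist z d0).
by have := hd v dv; lra.
Qed.

Lemma bounded_subset_compact (Omega : set 'rV[R]_n) (B : R) :
  (forall y, Omega y -> enorm y <= B) -> exists2 K, compact K & Omega `<=` K.
Proof.
move=> OB; exists [set v : 'rV[R]_n | forall i, `[- B, B]%classic (v ord0 i)].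
  by apply: (@rV_compact _ _ (fun=> `[- B, B]%classic)) => i; exact: segment_compact.
move=> w Ow i; rewrite /= in_itv /= -ler_norml.
exact: le_trans (ler_coord_enorm w i) (OB _ Ow).
Qed.

End EdistFunctions.

Section TestFunction.
Variables (R : realType) (n : nat) (alpha : R) (u : 'rV[R]_n -> R).
Variables (M m del d : R) (x z : 'rV[R]_n).
Hypotheses (alpha_gt0 : 0 < alpha) (alpha_le1 : alpha <= 1).
Hypotheses (m_le0 : m <= 0) (del_gt0 : 0 < del) (d_gt0 : 0 < d) (xz : x != z).
Hypothesis u_bounded : forall w, `|u w| <= M.
Hypothesis u_ge_cone : forall w, u x + m * Defs.edist x w `^ alpha - del <= u w.
Hypothesis u_z : u z = u x + m * Defs.edist x z `^ alpha - del.
Hypothesis u_near_x : forall w, Defs.edist x w < d -> u x - del / 2 < u w.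

Let s : R := Defs.edist x z.
Let L : R := (`|u x| + M) / d.
Let cone w : R := u x - del + m * Num.max (Defs.edist x w) s `^ alpha.
Let tent w : R := u x - del / 2 - L * Defs.edist x w.
Let psi w : R := Num.max (cone w) (Num.max (tent w) (- (M + 1))).

Let s_gt0 : 0 < s. Proof. exact: edist_gt0. Qed.
Let L_ge0 : 0 <= L.
Proof. by rewrite divr_ge0 ?(ltW d_gt0) // addr_ge0 // (le_trans _ (u_bounded x)). Qed.

Let u_ge w : - M <= u w.
Proof. by have := u_bounded w; rewrite ler_norml => /andP[]. Qed.

Let cone_le w : cone w <= u w.
Proof.
have := u_ge_cone w.
suff : m * Num.max (Defs.edist x w) s `^ alpha <= m * Defs.edist x w `^ alpha.
  by rewrite /cone; lra.
by rewrite ler_wnM2l // ler_powR_alpha ?edist_ge0_rV // le_max lexx.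
Qed.

Let cone_z : cone z = u z.
Proof. by rewrite /cone maxxx u_z /s; ring. Qed.

Let tent_le w : tent w <= u w.
Proof.
have [near|far] := ltP (Defs.edist x w) d.
  have := u_near_x near; have := mulr_ge0 L_ge0 (edist_ge0_rV x w).
  by rewrite /tent; lra.
have : `|u x| + M <= L * Defs.edist x w.
  by rewrite -[_ + M](divfK (lt0r_neq0 d_gt0)) ler_wpM2l.
by have := del_gt0; have := ler_norm (u x); have := u_ge w; rewrite /tent; lra.
Qed.

Let psi_le w : psi w <= u w.
Proof. by rewrite /psi !ge_max cone_le tent_le /=; have := u_ge w; lra. Qed.

Let psi_z : psi z = u z.
Proof. by rewrite /psi cone_z max_l // ge_max tent_le /=; have := u_ge z; lra. Qed.

Let psi_lipschitz : locally_lipschitz psi.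
Proof.
have maxL := edist_lipschitz_max (edist_lipschitz_edist x) (edist_lipschitz_cst s).
have s_le w : s <= Num.max (Defs.edist x w) s by rewrite le_max lexx orbT.
have coneL := edist_lipschitz_affine (u x - del) m
  (edist_lipschitz_powR alpha_gt0 alpha_le1 s_gt0 (addr_ge0 ler01 (lexx 0)) s_le maxL).
have tentL : edist_lipschitz (`|- L| * 1) tent.
  by move=> y y'; have := edist_lipschitz_affine (u x - del / 2) (- L)
    (edist_lipschitz_edist x) y y'; rewrite !mulNr.
exact/edist_lipschitz_locally/(edist_lipschitz_max coneL)/edist_lipschitz_max/edist_lipschitz_cst.
Qed.

Let psi_growth : growth_ok alpha psi.
Proof.
apply: (bounded_growth_ok (C := M + 1)) => // w; rewrite ler_norml.
have := psi_le w; have := u_bounded w; rewrite ler_norml /psi !le_max => /andP[_ uM].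
by rewrite lexx !orbT /=; lra.
Qed.

(* the test point [x], where the tent lifts [psi] to [u x - del / 2] *)
Let Lplus_psi : ((del / 2 / s `^ alpha - m)%:E <= Lplus alpha psi z)%E.
Proof.
apply: le_ereal_sup_tmp; exists (dq alpha psi z x)%:E; first by exists x; rewrite // eq_sym.
have psi_x : u x - del / 2 <= psi x.
  by rewrite /psi /tent !le_max edistxx mulr0 subr0 lexx !orbT.
have sa0 : 0 < s `^ alpha by rewrite powR_gt0.
rewrite lee_fin /dq psi_z edistC -/s ler_pdivlMr // mulrBl divfK ?lt0r_neq0 //.
by rewrite u_z -/s; lra.
Qed.

(* subadditivity of [t ^ alpha]: the cone part of [psi] has slope at least [m] at [z] *)
Let Lminus_psi : (m%:E <= Lminus alpha psi z)%E.
Proof.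
apply/ereal_infP => _ [w zw <-].
rewrite lee_fin /dq ler_pdivlMr ?powR_gt0 ?edist_gt0 1?eq_sym // psi_z -cone_z.
apply: (@le_trans _ _ (cone w - cone z)); last by rewrite lerD2r /psi le_max lexx.
have -> : cone w - cone z = m * (Num.max (Defs.edist x w) s `^ alpha - s `^ alpha).
  by rewrite /cone maxxx; ring.
rewrite ler_wnM2l //; have [xw_le|s_le] := leP (Defs.edist x w) s.
  by rewrite subrr powR_ge0.
rewrite lerBlDl.
rewrite (le_trans _ (powR_alphaD_le alpha_gt0 alpha_le1 (ltW s_gt0) (edist_ge0_rV z w))) //.
by rewrite ler_powR_alpha ?edist_ge0_rV // /s edist_triangle_rV.
Qed.

Lemma touching_test_function : exists phi,
  [/\ locally_lipschitz phi, growth_ok alpha phi, phi z = u z,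
      forall w, phi w <= u w & (0 < Linf alpha phi z)%E].
Proof.
exists psi; split => //; apply: lt_le_trans (leeD Lplus_psi Lminus_psi).
by rewrite -EFinD subrK lte_fin !divr_gt0 ?powR_gt0.
Qed.

End TestFunction.

Lemma supersol_cone_comparison (R : realType) (n : nat) (alpha : R)
    (Omega : set 'rV[R]_n) (f u : 'rV[R]_n -> R) (M B m : R) (x : 'rV[R]_n) :
  0 < alpha -> alpha <= 1 -> (forall y, Omega y -> enorm y <= B) ->
  (forall y, Omega y -> f y <= 0) -> (forall y, `|u y| <= M) ->
  visc_supersol alpha Omega f u -> Omega x -> m <= 0 ->
  (forall y, ~ Omega y -> u x + m * Defs.edist x y `^ alpha <= u y) ->
  forall y, Omega y -> u x + m * Defs.edist x y `^ alpha <= u y.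
Proof.
move=> a0 a1 OB f0 uM [ulsc [_ supersol]] Ox m0 u_out y Oy.
rewrite leNgt; apply/negP => uy.
pose g w := u w - (u x + m * Defs.edist x w `^ alpha).
have glsc : lower_semicont g.
  apply: (lower_semicontD ulsc (holder_lower_semicont (K := `|m|) a0 _)) => w w'.
  rewrite opprD opprK addrACA addNr add0r addrC -mulrBr normrM ler_wpM2l //.
  rewrite (le_trans (ler_dist_powR_alpha a0 a1 (edist_ge0_rV _ _) (edist_ge0_rV _ _))) //.
  by rewrite ler_powR_alpha // (edistC w w') ler_dist_edist.
have [K cK OK] := bounded_subset_compact OB.
have [z Kz zmin] := lower_semicont_min_compact cK (OK _ Oy) glsc.
have gz : g z < 0 by rewrite (le_lt_trans (zmin _ (OK _ Oy))) // subr_lt0.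
have g_out w : ~ Omega w -> 0 <= g w by move/u_out; rewrite subr_ge0.
have gmin w : g z <= g w.
  have [Ow|/g_out] := pselect (Omega w); [exact: zmin (OK _ Ow)|exact: le_trans (ltW gz)].
have Oz : Omega z by apply: contrapT => /g_out; rewrite leNgt gz.
have xz : x != z.
  by apply: contraTneq gz => <-; rewrite /g edistxx powR_alpha0 // mulr0 addr0 subrr ltxx.
have del0 : 0 < - g z by rewrite oppr_gt0.
have [d [d0 u_near_x]] := ulsc x (- g z / 2) (divr_gt0 del0 (ltr0Sn _ 1)).
have u_ge_cone w : u x + m * Defs.edist x w `^ alpha - - g z <= u w.
  by have := gmin w; rewrite [g w]/g lerBrDl opprK.
have u_z : u z = u x + m * Defs.edist x z `^ alpha - - g z.
  by rewrite opprK /g addrC subrK.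
have [phi [phiL phiG phiz phile Lphi]] :=
  touching_test_function a0 a1 m0 del0 d0 xz uM u_ge_cone u_z u_near_x.
have := le_trans (supersol z phi Oz phiL phiG phiz phile) (lee_tofin (f0 z Oz)).
by rewrite leNgt Lphi.
Qed.

Lemma ler_dq (R : realType) (n : nat) (alpha m : R) (u : 'rV[R]_n -> R) x y :
  x != y ->
  (m <= dq alpha u x y) = (u x + m * Defs.edist x y `^ alpha <= u y).
Proof.
by move=> xy; rewrite /dq ler_pdivlMr ?powR_gt0 ?edist_gt0 // -lerBrDl.
Qed.

Lemma ereal_inf_dq_compl_le0 (R : realType) (n : nat) (alpha : R)
    (Omega : set 'rV[R]_n) (u : 'rV[R]_n -> R) (M B : R) (x : 'rV[R]_n) :
  (0 < n)%N -> 0 < alpha -> (forall y, Omega y -> enorm y <= B) ->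
  (forall y, `|u y| <= M) ->
  (ereal_inf [set (dq alpha u x y)%:E | y in ~` Omega] <= 0)%E.
Proof.
move=> n0 a0 OB uM; apply/lee_addgt0Pr => e e0; rewrite add0e.
have M0 : 0 <= M := le_trans (normr_ge0 _) (uM x).
(* far away, [|x - y| ^ alpha >= 2 M / e] bounds the quotient by [e] *)
pose T := (2 * M / e + 1) `^ alpha^-1.
have T0 : 0 < T by rewrite powR_gt0 // ltr_pwDr // divr_ge0 ?mulr_ge0 // ltW.
have [y yfar] := exists_enorm_ge (`|B| + enorm x + T) n0.
have Oy : ~ Omega y.
  by move=> /OB; have := ler_norm B; have := enorm_ge0 x; lra.
have Txy : T <= Defs.edist x y by have := ler_enormB_edist x y; have := normr_ge0 B; lra.
have xy : x != y by apply/eqP => exy; move: Txy; rewrite exy edistxx; lra.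
apply: ge_ereal_inf; exists (dq alpha u x y)%:E; first by exists y.
rewrite lee_fin /dq ler_pdivrMr ?powR_gt0 ?edist_gt0 //.
have : 2 * M / e + 1 <= Defs.edist x y `^ alpha.
  have TE : T `^ alpha = 2 * M / e + 1.
    by rewrite -powRrM mulVf ?lt0r_neq0 // powRr1 // addr_ge0 // divr_ge0 ?mulr_ge0 ?(ltW e0).
  by rewrite -TE; exact: (ler_powR_alpha a0 (ltW T0) Txy).
move: (Defs.edist x y `^ alpha) => p /(ler_wpM2l (ltW e0)).
rewrite mulrDr mulr1 mulrCA divff ?lt0r_neq0 // mulr1.
by have := uM x; have := uM y; rewrite !ler_norml => /andP[? ?] /andP[? ?]; lra.
Qed.

Theorem mainTheorem2 (R : realType) (n : nat) (alpha : R)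
  (Omega : set 'rV[R]_n) (f u : 'rV[R]_n -> R) :
  (0 < n)%N -> 0 < alpha -> alpha <= 1 ->
  bounded_domain Omega ->
  {within Omega, continuous f} ->
  (exists M : R, forall x, Omega x -> `|f x| <= M) ->
  (forall x, Omega x -> f x <= 0) ->
  (exists M : R, forall x, `|u x| <= M) ->
  visc_supersol alpha Omega f u ->
  forall x, Omega x ->
    Lminus alpha u x =
    ereal_inf [set (dq alpha u x y)%:E | y in ~` Omega].
Proof.
move=> n0 a0 a1 [_ [_ [_ [B OB]]]] _ _ f0 [M uM] supersol x Ox.
have x_out y : ~ Omega y -> x != y by move=> Oy; apply/eqP => xy; apply: Oy; rewrite -xy.
set S := [set (dq alpha u x y)%:E | y in ~` Omega].
apply/eqP; rewrite eq_le; apply/andP; split.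
  by apply: ereal_inf_le_tmp; apply: image_subset => y /x_out; rewrite eq_sym.
apply/ereal_infP => _ [y yx <-].
have [Oy|Oy] := pselect (Omega y); last by apply: ereal_inf_lbound; exists y.
have S_le w : ~ Omega w -> (ereal_inf S <= (dq alpha u x w)%:E)%E.
  by move=> Ow; apply: ereal_inf_lbound; exists w.
have := ereal_inf_dq_compl_le0 x n0 a0 OB uM.
case: (ereal_inf S) S_le => [m S_le| _ |_ _]; [|by rewrite leye_eq|exact: leNye].
rewrite !lee_fin => m0; rewrite ler_dq 1?eq_sym //.
apply: (supersol_cone_comparison a0 a1 OB f0 uM supersol Ox m0) => // w Ow.
by rewrite -ler_dq ?x_out // -lee_fin S_le.
Qed.
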